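(* Let $G_1,\ldots,G_k$ be groups, $G=G_1\times\cdots\times G_k$, and for $i=1,\ldots,k$ let $H_i\le G_i$. Let $H\le G$ be a subgroup such that $H_1\times\cdots\times H_k\trianglelefteq H$, the quotient $N_G(H_1\times\cdots\times H_k)/(H_1\times\cdots\times H_k)$ is abelian, and $N_{G_i}(\sigma_i(H))=N_{G_i}(H_i)$ for all $i$. Then $$N_G(H)=N_G(H_1\times\cdots\times H_k)=N_{G_1}(H_1)\times\cdots\times N_{G_k}(H_k).$$
   Context: $\sigma_i:G\to G_i$ denotes the natural projection onto the $i$-th direct factor. *)

(* Arbitrary (possibly
   infinite) groups are given as a record carrying the group axioms. *)
From Stdlib Require Import FunctionalExtensionality.
From mathcomp Require Import all_boot.

Set Implicit Arguments.
Unset Strict Implicit.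
Unset Printing Implicit Defensive.

Record group := Group {
  gcar :> Type;
  gmul : gcar -> gcar -> gcar;
  gone : gcar;
  ginv : gcar -> gcar;
  gmulA : forall x y z, gmul x (gmul y z) = gmul (gmul x y) z;
  gmul1 : forall x, gmul gone x = x;
  gmulV : forall x, gmul (ginv x) x = gone
}.

Arguments gmul {g}.
Arguments gone {g}.
Arguments ginv {g}.

Definition gset (G : group) := G -> Prop.

Definition set_eq (G : group) (A B : gset G) := forall x, A x <-> B x.
Definition subset (G : group) (A B : gset G) := forall x, A x -> B x.

Definition is_subgroup (G : group) (H : gset G) : Prop :=
  H gone /\ (forall x y, H x -> H y -> H (gmul x y)) /\
  (forall x, H x -> H (ginv x)).

Definition normalizer (G : group) (A : gset G) : gset G :=
  fun g => forall x, A (gmul (gmul (ginv g) x) g) <-> A x.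

Definition normal_sub (G : group) (K H : gset G) : Prop :=
  is_subgroup K /\ is_subgroup H /\ subset K H /\
  forall h x, H h -> K x -> K (gmul (gmul (ginv h) x) h).

Definition lcoset (G : group) (K : gset G) (g : G) : gset G :=
  fun z => exists k, K k /\ z = gmul g k.

(* the quotient N/K (K normal in N) is abelian: (xK)(yK) = (yK)(xK),
   i.e. (xy)K = (yx)K for all x, y in N *)
Definition quotient_abelian (G : group) (N K : gset G) : Prop :=
  forall x y, N x -> N y -> set_eq (lcoset K (gmul x y)) (lcoset K (gmul y x)).

Section Prod.
Variables (k : nat) (Gs : 'I_k -> group).

Definition prod_car := forall i, Gs i.
Definition prod_mul (x y : prod_car) : prod_car := fun i => gmul (x i) (y i).
Definition prod_one : prod_car := fun i => gone.
Definition prod_inv (x : prod_car) : prod_car := fun i => ginv (x i).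

Lemma prod_mulA x y z : prod_mul x (prod_mul y z) = prod_mul (prod_mul x y) z.
Proof. apply: functional_extensionality_dep => i; exact: gmulA. Qed.
Lemma prod_mul1 x : prod_mul prod_one x = x.
Proof. apply: functional_extensionality_dep => i; exact: gmul1. Qed.
Lemma prod_mulV x : prod_mul (prod_inv x) x = prod_one.
Proof. apply: functional_extensionality_dep => i; exact: gmulV. Qed.

Definition prod_group : group := Group prod_mulA prod_mul1 prod_mulV.

Definition proj (i : 'I_k) (g : prod_group) : Gs i := g i.

Definition proj_set (i : 'I_k) (H : gset prod_group) : gset (Gs i) :=
  fun y => exists h, H h /\ proj i h = y.

Definition prod_set (Hs : forall i, gset (Gs i)) : gset prod_group :=
  fun g => forall i, Hs i (g i).
End Prod.
Arguments proj {k Gs} i g.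
Arguments proj_set {k Gs} i H _.
Arguments prod_set {k Gs} Hs _.

From Pilot Require Import Defs.
From mathcomp Require Import all_boot.
From Stdlib Require Import FunctionalExtensionality Setoid.

(* Write K := H_1 x ... x H_k.  Conjugation in G is coordinatewise and K
   contains every H_i placed in a single coordinate, so
   N_G(K) = N_{G_1}(H_1) x ... x N_{G_k}(H_k).  If g normalizes H, then
   sigma_i(g) normalizes sigma_i(H), i.e. lies in N_{G_i}(H_i); hence
   N_G(H) <= N_G(K).  Conversely, for g in N_G(K) and h in H <= N_G(K),
   commutativity of N_G(K)/K gives g^-1 h g in hK <= H, so g normalizes H. *)

Section GroupTheory.
Context {G : group}.
Implicit Types x y g : G.

Lemma mulgV x : gmul x (ginv x) = gone.
Proof.
rewrite -[gmul x (ginv x)]gmul1 -(gmulV (gmul x (ginv x))) -!gmulA.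
by rewrite [gmul (ginv x) (gmul x (ginv x))]gmulA gmulV gmul1.
Qed.

Lemma mulg1 x : gmul x gone = x.
Proof. by rewrite -(gmulV x) gmulA mulgV gmul1. Qed.

Lemma invgK x : ginv (ginv x) = x.
Proof. by rewrite -[LHS]mulg1 -(gmulV x) gmulA gmulV gmul1. Qed.

Lemma invMg x y : ginv (gmul x y) = gmul (ginv y) (ginv x).
Proof.
have xyV : gmul (gmul x y) (gmul (ginv y) (ginv x)) = gone.
  by rewrite -gmulA [gmul y _]gmulA mulgV gmul1 mulgV.
by rewrite -[LHS]mulg1 -xyV gmulA gmulV gmul1.
Qed.

Definition conjg x g := gmul (gmul (ginv g) x) g.

Lemma conj1g g : conjg gone g = gone.
Proof. by rewrite /conjg mulg1 gmulV. Qed.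

Lemma conjgM x g1 g2 : conjg x (gmul g1 g2) = conjg (conjg x g1) g2.
Proof. by rewrite /conjg invMg !gmulA. Qed.

Lemma conjgK x g : conjg (conjg x g) (ginv g) = x.
Proof. by rewrite /conjg invgK -!gmulA mulgV mulg1 !gmulA mulgV gmul1. Qed.

Lemma conjgKV x g : conjg (conjg x (ginv g)) g = x.
Proof. by rewrite -{2}(invgK g) conjgK. Qed.

Lemma normalizerP (A : gset G) g :
  normalizer A g <-> forall x, A (conjg x g) <-> A x.
Proof. by []. Qed.

Lemma normalizerV {A : gset G} {g} : normalizer A g -> normalizer A (ginv g).
Proof.
move/normalizerP=> Ng; apply/normalizerP => x.
by have := Ng (conjg x (ginv g)); rewrite conjgKV; apply: iff_sym.
Qed.

Lemma normalizerM {A : gset G} {g1 g2} :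
  normalizer A g1 -> normalizer A g2 -> normalizer A (gmul g1 g2).
Proof.
move=> /normalizerP Ng1 /normalizerP Ng2; apply/normalizerP => x.
by rewrite conjgM; apply: iff_trans (Ng2 _) (Ng1 x).
Qed.

Lemma normalizer_of_conj_closed (A : gset G) g :
  (forall x, A x -> A (conjg x g)) -> (forall x, A x -> A (conjg x (ginv g))) ->
  normalizer A g.
Proof.
move=> Ag AgV; apply/normalizerP => x; split=> [/AgV|/Ag //].
by rewrite conjgK.
Qed.

Section NormalSubgroup.
Variables K H : gset G.
Hypothesis nKH : normal_sub K H.

Lemma normal_sub_normalizer : Defs.subset H (normalizer K).
Proof.
have [_ [[_ [_ invH]] [_ conjK]]] := nKH.
move=> h Hh; apply: normalizer_of_conj_closed => x Kx; apply: conjK => //.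
exact: invH.
Qed.

Hypothesis abelian_quo : quotient_abelian (normalizer K) K.

Lemma conjg_mem_quotient_abelian g h :
  normalizer K g -> H h -> H (conjg h g).
Proof.
have [[K1 _] [[_ [mulH invH]] [sKH _]]] := nKH.
move=> Ng Hh.
(* In the abelian quotient, (g^-1 h g) K = (h g g^-1) K = h K. *)
have : lcoset K (gmul (ginv g) (gmul h g)) (gmul (gmul h g) (ginv g)).
  apply: (abelian_quo _ _ (normalizerV Ng)
                          (normalizerM (normal_sub_normalizer _ Hh) Ng) _).2.
  by exists gone; rewrite mulg1.
case=> c [Kc hgc].
have -> : conjg h g = gmul h (ginv c).
  rewrite -[conjg h g]mulg1 -(mulgV c) gmulA /conjg -(gmulA (ginv g)) -hgc.
  by rewrite -(gmulA h) mulgV mulg1.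
exact: mulH Hh (invH _ (sKH _ Kc)).
Qed.

Lemma normalizer_sub_quotient_abelian :
  Defs.subset (normalizer K) (normalizer H).
Proof.
move=> g Ng; apply: normalizer_of_conj_closed => h Hh.
  exact: conjg_mem_quotient_abelian Ng Hh.
exact: conjg_mem_quotient_abelian (normalizerV Ng) Hh.
Qed.

End NormalSubgroup.
End GroupTheory.

Section DirectProduct.
Context {k : nat} {Gs : 'I_k -> group}.

Lemma conjg_prodE (x g : prod_group Gs) i : conjg x g i = conjg (x i) (g i).
Proof. by []. Qed.

Definition embed {i : 'I_k} (y : Gs i) : prod_group Gs := fun j =>
  if @eqP _ i j is ReflectT e then ecast j (Gs j) e y else gone.

Lemma embed_id i (y : Gs i) : embed y i = y.
Proof. by rewrite /embed; case: eqP => // e; rewrite eq_axiomK. Qed.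

Lemma embed_neq i (y : Gs i) j : i != j -> embed y j = gone.
Proof. by rewrite /embed; case: eqP => // ->; rewrite eqxx. Qed.

Lemma conjg_embed i (y : Gs i) g : conjg (embed y) g = embed (conjg y (g i)).
Proof.
apply: functional_extensionality_dep => j; rewrite conjg_prodE.
case: (eqVneq i j) => [ij | neq_ij]; first by subst j; rewrite !embed_id.
by rewrite !embed_neq // conj1g.
Qed.

Lemma prod_set_embed (Hs : forall i, gset (Gs i)) {i} (y : Gs i) :
  (forall j, Hs j gone) -> prod_set Hs (embed y) <-> Hs i y.
Proof.
move=> Hs1; split=> [/(_ i)|Hy j]; first by rewrite embed_id.
case: (eqVneq i j) => [ij | neq_ij]; first by subst j; rewrite embed_id.
by rewrite embed_neq.
Qed.

Lemma normalizer_prod_set (Hs : forall i, gset (Gs i)) :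
  (forall i, Hs i gone) ->
  set_eq (normalizer (prod_set Hs)) (prod_set (fun i => normalizer (Hs i))).
Proof.
move=> Hs1 g; split=> [/normalizerP Ng i | Ng].
  apply/normalizerP => y; have := Ng (embed y).
  by rewrite conjg_embed !prod_set_embed.
by move=> x; split=> Hx i; apply/(Ng i (x i)).
Qed.

Lemma normalizer_proj_set (H : gset (prod_group Gs)) i g :
  normalizer H g -> normalizer (proj_set i H) (proj i g).
Proof.
move/normalizerP=> Ng; apply/normalizerP => y.
split=> [[h [Hh hy]] | [h [Hh <-]]].
  exists (conjg h (ginv g)); split; first by apply/Ng; rewrite conjgKV.
  by rewrite /proj in hy *; rewrite conjg_prodE hy conjgK.
by exists (conjg h g); split; first exact/Ng.
Qed.

End DirectProduct.

Theorem lemma5p1 (k : nat) (Gs : 'I_k -> group)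
  (Hs : forall i, gset (Gs i)) (H : gset (prod_group Gs)) :
  (forall i, is_subgroup (Hs i)) ->
  is_subgroup H ->
  normal_sub (prod_set Hs) H ->
  quotient_abelian (normalizer (prod_set Hs)) (prod_set Hs) ->
  (forall i, set_eq (normalizer (proj_set i H)) (normalizer (Hs i))) ->
  set_eq (normalizer H) (normalizer (prod_set Hs)) /\
  set_eq (normalizer (prod_set Hs))
         (prod_set (fun i => normalizer (Hs i))).
Proof.
move=> sHs _ nKH abelian_quo projN.
have NK := normalizer_prod_set Hs (fun i => (sHs i).1).
split=> // g; split=> [Ng | ]; last exact: normalizer_sub_quotient_abelian.
by apply/NK => i; apply/projN; apply: normalizer_proj_set.
Qed.
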